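(* For every integer $k\ge1$ and all $a,b\in\mathbb{C}$ such that $\frac{a+k+1}{2}$ and $\frac{a+k+m}{2}$ ($m=0,1,\dots,k$) are not nonpositive integers, $$\frac{\Gamma\!\left(\frac{a+k+1}{2}\right)}{\Gamma\!\left(\frac{a-k+1}{2}-b\right)}=\sum_{m=0}^{k}\binom{k}{m}\left(a+\frac{k-1}{2}-\frac{bm}{k}-\frac{(k+1)(a+k-1)}{2(m+1)}\right)\frac{\Gamma\!\left(\frac{a+k+m}{2}\right)}{\Gamma\!\left(\frac{a-k+m}{2}-b+1\right)}.$$
   Context: $\Gamma$ is Euler's gamma function; $1/\Gamma$ is understood as the entire function (equal to $0$ at nonpositive integers). *)

From Stdlib Require Import Reals Arith Lra Lia Classical ClassicalEpsilon.
Open Scope R_scope.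

Record Cpx : Type := mkC { Re : R ; Im : R }.

Definition RtoC (x : R) : Cpx := mkC x 0.
Definition Cpx0 : Cpx := RtoC 0.
Definition Cpx1 : Cpx := RtoC 1.
Definition Cadd (z w : Cpx) : Cpx := mkC (Re z + Re w) (Im z + Im w).
Definition Copp (z : Cpx) : Cpx := mkC (- Re z) (- Im z).
Definition Csub (z w : Cpx) : Cpx := Cadd z (Copp w).
Definition Cmul (z w : Cpx) : Cpx :=
  mkC (Re z * Re w - Im z * Im w) (Re z * Im w + Im z * Re w).
Definition Cnorm2 (z : Cpx) : R := Re z * Re z + Im z * Im z.
Definition Cinv (z : Cpx) : Cpx := mkC (Re z / Cnorm2 z) (- Im z / Cnorm2 z).
Definition Cdiv (z w : Cpx) : Cpx := Cmul z (Cinv w).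
Definition Cabs (z : Cpx) : R := sqrt (Cnorm2 z).
Definition Cexp (z : Cpx) : Cpx := mkC (exp (Re z) * cos (Im z)) (exp (Re z) * sin (Im z)).
(* n ^ z for a natural number n >= 1, principal branch: exp (z ln n) *)
Definition Cnatpow (n : nat) (z : Cpx) : Cpx := Cexp (Cmul z (RtoC (ln (INR n)))).

Fixpoint Csum (f : nat -> Cpx) (n : nat) : Cpx :=
  match n with O => f O | S p => Cadd (Csum f p) (f (S p)) end.
Fixpoint Cprod (f : nat -> Cpx) (n : nat) : Cpx :=
  match n with O => f O | S p => Cmul (Cprod f p) (f (S p)) end.

Definition Ccv (u : nat -> Cpx) (l : Cpx) : Prop :=
  forall eps : R, eps > 0 -> exists N : nat, forall n : nat, (n >= N)%nat ->
    Cabs (Csub (u n) l) < eps.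

(* Gauss' product: z(z+1)...(z+n) / (n! n^z), which tends to 1/Gamma(z) for
   every complex z. *)
Definition gauss_seq (z : Cpx) (n : nat) : Cpx :=
  Cdiv (Cprod (fun j => Cadd z (RtoC (INR j))) n)
       (Cmul (RtoC (INR (fact n))) (Cnatpow n z)).

(* 1/Gamma, the entire reciprocal Gamma function (0 at nonpositive integers) *)
Definition rgamma (z : Cpx) : Cpx :=
  epsilon (inhabits Cpx0) (fun w => Ccv (gauss_seq z) w).

(* Euler's Gamma function (meaningful off the nonpositive integers) *)
Definition Gamma (z : Cpx) : Cpx := Cinv (rgamma z).

Definition nonpos_int (z : Cpx) : Prop := exists n : nat, z = RtoC (- INR n).

From Stdlib Require Import Reals Arith Lra Lia Psatz Classical ClassicalEpsilon.
Open Scope R_scope.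

(* Gauss' product z (z+1) ... (z+n) / (n! n^z) converges for every z because the
   quotient of consecutive terms is 1 + O(1/n^2); shifting z to z+1 multiplies it
   by z / (1 + (z+1)/n), whence 1/Gamma(z) = z / Gamma(z+1).
   Put A_m = (a+k+m)/2, B_m = (a-k+m)/2 - b, w_j = (j/k) binom(k, j) (zero for
   j > k) and T_j = w_j Gamma(A_j) / Gamma(B_j).  Since A_(m+2) = A_m + 1 and
   B_(m+2) = B_m + 1, the recurrence shows that the m-th summand is
   T_m - T_(m+2), so the sum telescopes to T_0 + T_1 - T_(k+1) - T_(k+2) = T_1,
   which is the left-hand side. *)

(** * Complex arithmetic *)

Lemma Cpx_ext (z w : Cpx) : Re z = Re w -> Im z = Im w -> z = w.
Proof. destruct z, w; simpl; intros -> ->; reflexivity. Qed.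

Ltac Cpx_eq := apply Cpx_ext; simpl.

Lemma Cpx_ring : ring_theory Cpx0 Cpx1 Cadd Cmul Csub Copp (@eq Cpx).
Proof. constructor; intros; Cpx_eq; unfold Cpx0, Cpx1, RtoC; simpl; ring. Qed.

Lemma Cnorm2_eq0 (z : Cpx) : Cnorm2 z = 0 -> z = Cpx0.
Proof.
  destruct z as [x y]; unfold Cnorm2; simpl; intros H.
  assert (x = 0) by nra; assert (y = 0) by nra; subst; reflexivity.
Qed.

Lemma Cpx_field : field_theory Cpx0 Cpx1 Cadd Cmul Csub Copp Cdiv Cinv (@eq Cpx).
Proof.
  constructor.
  - exact Cpx_ring.
  - intros H; apply (f_equal Re) in H; simpl in H; lra.
  - reflexivity.
  - intros z Hz.
    assert (Cnorm2 z <> 0) by (intros E; apply Hz, Cnorm2_eq0, E).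
    Cpx_eq; unfold Cnorm2 in *; simpl; field; auto.
Qed.

Add Field Cpx_field : Cpx_field.

Lemma RtoC_neq0 (r : R) : r <> 0 -> RtoC r <> Cpx0.
Proof. intros H E; apply H, (f_equal Re E). Qed.

Lemma RtoC_add (r s : R) : RtoC (r + s) = Cadd (RtoC r) (RtoC s).
Proof. Cpx_eq; ring. Qed.

Lemma RtoC_mul (r s : R) : RtoC (r * s) = Cmul (RtoC r) (RtoC s).
Proof. Cpx_eq; ring. Qed.

Lemma RtoC_inv (r : R) : r <> 0 -> RtoC (/ r) = Cdiv Cpx1 (RtoC r).
Proof. intros H; Cpx_eq; unfold Cnorm2; simpl; field; auto. Qed.

Lemma Cdiv_RtoC (z : Cpx) (r : R) : r <> 0 -> Cdiv z (RtoC r) = mkC (Re z / r) (Im z / r).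
Proof. intros H; Cpx_eq; unfold Cnorm2; simpl; field; auto. Qed.

(* [Cinv] is total with the junk value [Cinv Cpx0 = Cpx0], which makes it
   multiplicative without side conditions. *)
Lemma Cinv0 : Cinv Cpx0 = Cpx0.
Proof.
  unfold Cinv, Cnorm2, Cpx0, RtoC; simpl.
  replace (0 * 0 + 0 * 0) with 0 by ring; unfold Rdiv; rewrite Rinv_0.
  f_equal; ring.
Qed.

Lemma Cinv_mul (z w : Cpx) : Cinv (Cmul z w) = Cmul (Cinv z) (Cinv w).
Proof.
  destruct (classic (z = Cpx0)) as [->|Hz].
  { replace (Cmul Cpx0 w) with Cpx0 by ring; rewrite Cinv0; ring. }
  destruct (classic (w = Cpx0)) as [->|Hw].
  { replace (Cmul z Cpx0) with Cpx0 by ring; rewrite Cinv0; ring. }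
  assert (Hzw : Cmul z w <> Cpx0).
  { intros E.
    apply (f_equal (fun u => Cmul u (Cmul (Cinv z) (Cinv w)))) in E.
    replace (Cmul (Cmul z w) (Cmul (Cinv z) (Cinv w))) with Cpx1 in E by (field; auto).
    apply (f_equal Re) in E; unfold Cpx0, Cpx1 in E; simpl in E; lra. }
  replace (Cinv (Cmul z w)) with (Cdiv Cpx1 (Cmul z w)) by (unfold Cdiv; ring).
  replace (Cinv z) with (Cdiv Cpx1 z) by (unfold Cdiv; ring).
  replace (Cinv w) with (Cdiv Cpx1 w) by (unfold Cdiv; ring).
  field; auto.
Qed.

Lemma Cexp_add (u v : Cpx) : Cexp (Cadd u v) = Cmul (Cexp u) (Cexp v).
Proof. Cpx_eq; unfold Cexp; simpl; rewrite exp_plus, ?cos_plus, ?sin_plus; ring. Qed.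

Lemma Cexp_neq0 (u : Cpx) : Cexp u <> Cpx0.
Proof.
  intros E; pose proof (f_equal Re E) as E1; pose proof (f_equal Im E) as E2.
  unfold Cexp, Cpx0, RtoC in *; simpl in *.
  pose proof (exp_pos (Re u)); pose proof (sin2_cos2 (Im u)); unfold Rsqr in *.
  apply Rmult_integral in E1; apply Rmult_integral in E2.
  destruct E1, E2; try lra; nra.
Qed.

Definition Cnorm1 (z : Cpx) : R := Rabs (Re z) + Rabs (Im z).

Lemma Cnorm1_ge0 (z : Cpx) : 0 <= Cnorm1 z.
Proof. unfold Cnorm1; pose proof (Rabs_pos (Re z)); pose proof (Rabs_pos (Im z)); lra. Qed.

Lemma Cnorm1_add (z w : Cpx) : Cnorm1 (Cadd z w) <= Cnorm1 z + Cnorm1 w.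
Proof.
  unfold Cnorm1; simpl.
  pose proof (Rabs_triang (Re z) (Re w)); pose proof (Rabs_triang (Im z) (Im w)); lra.
Qed.

Lemma Cnorm1_mul (z w : Cpx) : Cnorm1 (Cmul z w) <= Cnorm1 z * Cnorm1 w.
Proof.
  unfold Cnorm1; simpl.
  pose proof (Rabs_triang (Re z * Re w) (- (Im z * Im w))).
  pose proof (Rabs_triang (Re z * Im w) (Im z * Re w)).
  rewrite Rabs_Ropp, !Rabs_mult in *; unfold Rminus; nra.
Qed.

Lemma Cnorm1_mul_RtoC (z : Cpx) (r : R) : Cnorm1 (Cmul z (RtoC r)) = Cnorm1 z * Rabs r.
Proof.
  unfold Cnorm1; simpl.
  replace (Re z * r - Im z * 0) with (Re z * r) by ring.
  replace (Re z * 0 + Im z * r) with (Im z * r) by ring.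
  rewrite !Rabs_mult; ring.
Qed.

Lemma Cnorm1_sub_sym (z w : Cpx) : Cnorm1 (Csub z w) = Cnorm1 (Csub w z).
Proof.
  unfold Cnorm1; simpl.
  rewrite <- (Rabs_Ropp (Re z + - Re w)), <- (Rabs_Ropp (Im z + - Im w)).
  f_equal; f_equal; ring.
Qed.

Lemma Cabs_le_Cnorm1 (z : Cpx) : Cabs z <= Cnorm1 z.
Proof.
  unfold Cabs, Cnorm2, Cnorm1.
  pose proof (Rabs_pos (Re z)); pose proof (Rabs_pos (Im z)).
  rewrite <- (sqrt_Rsqr (Rabs (Re z) + Rabs (Im z))) by lra.
  apply sqrt_le_1_alt; unfold Rsqr.
  pose proof (Rsqr_abs (Re z)); pose proof (Rsqr_abs (Im z)); unfold Rsqr in *.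
  nra.
Qed.

(** * Convergence of complex sequences *)

Lemma Rabs_Re_le_Cabs (z : Cpx) : Rabs (Re z) <= Cabs z.
Proof. unfold Cabs, Cnorm2; rewrite <- sqrt_Rsqr_abs; apply sqrt_le_1_alt; unfold Rsqr; nra. Qed.

Lemma Rabs_Im_le_Cabs (z : Cpx) : Rabs (Im z) <= Cabs z.
Proof. unfold Cabs, Cnorm2; rewrite <- sqrt_Rsqr_abs; apply sqrt_le_1_alt; unfold Rsqr; nra. Qed.

Definition Ccv_parts (u : nat -> Cpx) (l : Cpx) : Prop :=
  Un_cv (fun n => Re (u n)) (Re l) /\ Un_cv (fun n => Im (u n)) (Im l).

Lemma Ccv_parts_of_Ccv (u : nat -> Cpx) (l : Cpx) : Ccv u l -> Ccv_parts u l.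
Proof.
  intros H; split; intros eps Heps; destruct (H eps Heps) as [N HN]; exists N;
    intros n Hn; unfold R_dist; eapply Rle_lt_trans; try apply (HN n Hn).
  - apply (Rabs_Re_le_Cabs (Csub (u n) l)).
  - apply (Rabs_Im_le_Cabs (Csub (u n) l)).
Qed.

Lemma Ccv_parts_unique (u : nat -> Cpx) (l1 l2 : Cpx) :
  Ccv_parts u l1 -> Ccv_parts u l2 -> l1 = l2.
Proof. intros [a1 b1] [a2 b2]; apply Cpx_ext; eapply UL_sequence; eauto. Qed.

Lemma Ccv_parts_add (u w : nat -> Cpx) (l m : Cpx) :
  Ccv_parts u l -> Ccv_parts w m -> Ccv_parts (fun n => Cadd (u n) (w n)) (Cadd l m).
Proof. intros [a1 b1] [a2 b2]; split; simpl; apply CV_plus; auto. Qed.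

Lemma Ccv_parts_mul (u w : nat -> Cpx) (l m : Cpx) :
  Ccv_parts u l -> Ccv_parts w m -> Ccv_parts (fun n => Cmul (u n) (w n)) (Cmul l m).
Proof.
  intros [a1 b1] [a2 b2]; split; simpl.
  - apply CV_minus; apply CV_mult; auto.
  - apply CV_plus; apply CV_mult; auto.
Qed.

Lemma Ccv_parts_const (c : Cpx) : Ccv_parts (fun _ => c) c.
Proof.
  split; intros eps Heps; exists O; intros; unfold R_dist; rewrite Rminus_diag, Rabs_R0; auto.
Qed.

Lemma Ccv_parts_inv_INR : Ccv_parts (fun n => RtoC (/ INR n)) Cpx0.
Proof.
  split; simpl.
  - apply cv_infty_cv_0; intros M; destruct (INR_unbounded M) as [N HN]; exists N.
    intros n Hn; assert (INR N <= INR n) by (apply le_INR; lia); lra.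
  - apply (Ccv_parts_const Cpx0).
Qed.

Lemma Ccv_parts_ext_pos (u w : nat -> Cpx) (l : Cpx) :
  (forall n, (1 <= n)%nat -> u n = w n) -> Ccv_parts u l -> Ccv_parts w l.
Proof.
  intros E [a b]; split; intros eps Heps.
  - destruct (a eps Heps) as [N HN]; exists (max N 1); intros n Hn.
    rewrite <- E by lia; apply HN; lia.
  - destruct (b eps Heps) as [N HN]; exists (max N 1); intros n Hn.
    rewrite <- E by lia; apply HN; lia.
Qed.

Lemma Ccv_of_Cnorm1_Cauchy (g : nat -> Cpx) :
  (forall eps, 0 < eps -> exists N, forall n m, (N <= n)%nat -> (N <= m)%nat ->
     Cnorm1 (Csub (g n) (g m)) < eps) ->
  exists l, Ccv g l.
Proof.
  intros Cau.
  assert (CRe : Cauchy_crit (fun n => Re (g n))).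
  { intros eps Heps; destruct (Cau eps Heps) as [N HN]; exists N; intros n m Hn Hm.
    pose proof (HN n m Hn Hm) as H; unfold Cnorm1 in H; simpl in H.
    pose proof (Rabs_pos (Im (g n) + - Im (g m))); unfold R_dist, Rminus; lra. }
  assert (CIm : Cauchy_crit (fun n => Im (g n))).
  { intros eps Heps; destruct (Cau eps Heps) as [N HN]; exists N; intros n m Hn Hm.
    pose proof (HN n m Hn Hm) as H; unfold Cnorm1 in H; simpl in H.
    pose proof (Rabs_pos (Re (g n) + - Re (g m))); unfold R_dist, Rminus; lra. }
  destruct (R_complete _ CRe) as [lr Hr], (R_complete _ CIm) as [li Hi].
  exists (mkC lr li); intros eps Heps.
  destruct (Hr (eps / 2) ltac:(lra)) as [Na HNa], (Hi (eps / 2) ltac:(lra)) as [Nb HNb].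
  exists (max Na Nb); intros n Hn.
  eapply Rle_lt_trans; [apply Cabs_le_Cnorm1|].
  pose proof (HNa n ltac:(lia)); pose proof (HNb n ltac:(lia)); unfold R_dist in *.
  unfold Cnorm1; simpl; unfold Rminus in *; lra.
Qed.

Lemma inv_INR_S_diff (n : nat) : (1 <= n)%nat ->
  / INR n - / INR (S n) = / (INR n * (INR n + 1)).
Proof. intros Hn; assert (1 <= INR n) by (apply (le_INR 1); auto); rewrite S_INR; field; lra. Qed.

Lemma inv_INR_S_diff_ge0 (n : nat) : (1 <= n)%nat -> 0 <= / INR n - / INR (S n).
Proof.
  intros Hn; assert (1 <= INR n) by (apply (le_INR 1); auto).
  rewrite inv_INR_S_diff by auto; left; apply Rinv_0_lt_compat; nra.
Qed.

Lemma Ccv_of_increments (g : nat -> Cpx) (c : R) (N0 : nat) :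
  (1 <= N0)%nat -> 0 <= c ->
  (forall n, (N0 <= n)%nat ->
     Cnorm1 (Csub (g (S n)) (g n)) <= c * (/ INR n - / INR (S n))) ->
  exists l, Ccv g l.
Proof.
  intros HN0 Hc Hstep.
  assert (Htel : forall n p, (N0 <= n)%nat ->
            Cnorm1 (Csub (g (n + p)%nat) (g n)) <= c * (/ INR n - / INR (n + p))).
  { intros n p Hn; induction p as [|p IH].
    - rewrite Nat.add_0_r, Rminus_diag, Rmult_0_r.
      replace (Csub (g n) (g n)) with Cpx0 by ring.
      unfold Cnorm1; simpl; rewrite Rabs_R0; lra.
    - replace (n + S p)%nat with (S (n + p)) by lia.
      replace (Csub (g (S (n + p))) (g n)) with
        (Cadd (Csub (g (S (n + p))) (g (n + p)%nat)) (Csub (g (n + p)%nat) (g n))) by ring.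
      eapply Rle_trans; [apply Cnorm1_add|].
      pose proof (Hstep (n + p)%nat ltac:(lia)); lra. }
  apply Ccv_of_Cnorm1_Cauchy; intros eps Heps.
  destruct (INR_unbounded (c / eps)) as [N HN].
  assert (Hsmall : forall n, (max N0 (S N) <= n)%nat -> c * / INR n < eps).
  { intros n Hn.
    assert (INR (S N) <= INR n) by (apply le_INR; lia); rewrite S_INR in *.
    assert (0 <= INR N) by apply pos_INR.
    assert (c < eps * INR n).
    { apply (Rmult_lt_reg_r (/ eps)); [apply Rinv_0_lt_compat; lra|].
      replace (eps * INR n * / eps) with (INR n) by (field; lra); unfold Rdiv in HN; lra. }
    apply (Rmult_lt_reg_r (INR n)); [lra|]; rewrite Rmult_assoc, Rinv_l by lra; lra. }
  assert (Hle : forall n m, (max N0 (S N) <= n)%nat -> (n <= m)%nat ->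
            Cnorm1 (Csub (g m) (g n)) < eps).
  { intros n m Hn Hnm; replace m with (n + (m - n))%nat by lia.
    eapply Rle_lt_trans; [apply Htel; lia|].
    assert (0 < / INR (n + (m - n))).
    { apply Rinv_0_lt_compat, lt_0_INR; lia. }
    pose proof (Hsmall n Hn); nra. }
  exists (max N0 (S N)); intros n m Hn Hm; destruct (Nat.le_ge_cases n m).
  - rewrite Cnorm1_sub_sym; auto.
  - auto.
Qed.

Lemma Cnorm1_bound_of_ratio (g : nat -> Cpx) (K : R) (N0 : nat) :
  (1 <= N0)%nat -> 0 <= K ->
  (forall n, (N0 <= n)%nat ->
     Cnorm1 (Csub (g (S n)) (g n)) <= K * Cnorm1 (g n) * (/ INR n - / INR (S n))) ->
  forall n, (N0 <= n)%nat -> Cnorm1 (g n) <= Cnorm1 (g N0) * exp (K / INR N0).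
Proof.
  intros HN0 HK Hstep.
  (* [1 + x <= exp x] turns the increments into a product bounded by an exponential *)
  assert (Hexp : forall p, Cnorm1 (g (N0 + p)%nat)
            <= Cnorm1 (g N0) * exp (K * (/ INR N0 - / INR (N0 + p)))).
  { induction p as [|p IH].
    - rewrite Nat.add_0_r, Rminus_diag, Rmult_0_r, exp_0; lra.
    - replace (N0 + S p)%nat with (S (N0 + p)) by lia.
      set (m := (N0 + p)%nat) in *.
      pose proof (Hstep m ltac:(unfold m; lia)) as Hs.
      pose proof (inv_INR_S_diff_ge0 m ltac:(unfold m; lia)) as Hd.
      assert (Hg : Cnorm1 (g (S m)) <= Cnorm1 (g m) * (1 + K * (/ INR m - / INR (S m)))).
      { replace (g (S m)) with (Cadd (g m) (Csub (g (S m)) (g m))) by ring.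
        eapply Rle_trans; [apply Cnorm1_add|]; nra. }
      pose proof (exp_ineq1_le (K * (/ INR m - / INR (S m)))).
      pose proof (Cnorm1_ge0 (g m)).
      eapply Rle_trans; [exact Hg|].
      eapply Rle_trans; [apply Rmult_le_compat_l; eauto|].
      eapply Rle_trans; [apply Rmult_le_compat_r; [left; apply exp_pos | exact IH]|].
      rewrite Rmult_assoc, <- exp_plus; right; f_equal; f_equal; ring. }
  intros n Hn; replace n with (N0 + (n - N0))%nat by lia.
  eapply Rle_trans; [apply Hexp|].
  apply Rmult_le_compat_l; [apply Cnorm1_ge0|].
  assert (0 < / INR (N0 + (n - N0))) by (apply Rinv_0_lt_compat, lt_0_INR; lia).
  assert (K * (/ INR N0 - / INR (N0 + (n - N0))) <= K / INR N0) by (unfold Rdiv; nra).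
  destruct H0 as [Hlt|Heq]; [left; apply exp_increasing; auto | right; rewrite Heq; auto].
Qed.

Lemma Ccv_of_ratio (g : nat -> Cpx) (K : R) (N0 : nat) :
  (1 <= N0)%nat -> 0 <= K ->
  (forall n, (N0 <= n)%nat ->
     Cnorm1 (Csub (g (S n)) (g n)) <= K * Cnorm1 (g n) * (/ INR n - / INR (S n))) ->
  exists l, Ccv g l.
Proof.
  intros HN0 HK Hstep.
  set (M := Cnorm1 (g N0) * exp (K / INR N0)).
  assert (HM : 0 <= M) by (pose proof (Cnorm1_ge0 (g N0)); pose proof (exp_pos (K / INR N0)); unfold M; nra).
  apply (Ccv_of_increments g (K * M) N0); auto; [apply Rmult_le_pos; auto|].
  intros n Hn; eapply Rle_trans; [apply Hstep; auto|].
  apply Rmult_le_compat_r; [apply inv_INR_S_diff_ge0; lia|].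
  apply Rmult_le_compat_l; auto; apply (Cnorm1_bound_of_ratio g K N0); auto.
Qed.

(** * Elementary estimates near 0 *)

Lemma Rabs_le_bounds (x a : R) : Rabs x <= a -> - a <= x <= a.
Proof. unfold Rabs; destruct (Rcase_abs x); intros; lra. Qed.

Lemma exp_small_bounds (a : R) : Rabs a <= 1 / 2 ->
  Rabs (exp a - 1 - a) <= 2 * a ^ 2 /\ exp a <= 2 /\ Rabs (exp a - 1) <= 2 * Rabs a.
Proof.
  intros Ha.
  pose proof (exp_ineq1_le a); pose proof (exp_ineq1_le (- a)).
  assert (exp a * exp (- a) = 1) by (rewrite <- exp_plus, Rplus_opp_r; apply exp_0).
  pose proof (exp_pos a); pose proof (exp_pos (- a)).
  apply Rabs_le_bounds in Ha.
  assert (exp a * (1 - a) <= 1) by nra.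
  assert (exp a - 1 - a <= 2 * a ^ 2) by nra.
  assert (exp a <= 2) by nra.
  split; [|split; auto].
  - apply Rabs_le; nra.
  - apply Rabs_le; destruct (Rle_dec 0 a).
    + rewrite Rabs_right by lra; nra.
    + rewrite Rabs_left by lra; nra.
Qed.

Lemma sin_small_bounds_pos (a : R) : 0 <= a <= 1 -> a - a ^ 2 <= sin a <= a.
Proof.
  intros H; destruct (pre_sin_bound a 0 ltac:(lra) ltac:(lra)) as [H1 H2].
  unfold sin_approx in H1, H2; cbn [sum_f_R0 Nat.mul Nat.add] in H1, H2.
  unfold sin_term in H1, H2.
  replace (INR (fact (2 * 1 + 1))) with 6 in * by (simpl; ring).
  replace (INR (fact (2 * 2 + 1))) with 120 in * by (simpl; ring).
  replace (INR (fact (2 * 0 + 1))) with 1 in * by (simpl; ring).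
  simpl pow in *.
  assert (0 <= a * a) by nra; assert (a * a <= 1) by nra.
  assert (0 <= a * a * a) by nra; assert (a * a * a <= a * a) by nra.
  assert (a * a * a * a * a <= a * a * a) by nra.
  split; lra.
Qed.

Lemma sin_small_bounds (a : R) : Rabs a <= 1 ->
  Rabs (sin a - a) <= a ^ 2 /\ Rabs (sin a) <= Rabs a.
Proof.
  intros Ha; apply Rabs_le_bounds in Ha; destruct (Rle_dec 0 a).
  - destruct (sin_small_bounds_pos a ltac:(lra)); assert (0 <= a ^ 2) by nra.
    split; apply Rabs_le; rewrite ?(Rabs_right a) by lra; nra.
  - destruct (sin_small_bounds_pos (- a) ltac:(lra)); rewrite sin_neg in *.
    assert (0 <= a ^ 2) by nra.
    split; apply Rabs_le; rewrite ?(Rabs_left a) by lra; nra.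
Qed.

Lemma cos_small_bound (a : R) : Rabs a <= 2 -> Rabs (cos a - 1) <= a ^ 2 / 2.
Proof.
  intros Ha; apply Rabs_le_bounds in Ha.
  destruct (pre_cos_bound a 0 ltac:(lra) ltac:(lra)) as [H1 H2].
  unfold cos_approx in H1, H2; cbn [sum_f_R0 Nat.mul Nat.add] in H1, H2.
  unfold cos_term in H1, H2.
  replace (INR (fact (2 * 1))) with 2 in * by (simpl; ring).
  replace (INR (fact (2 * 2))) with 24 in * by (simpl; ring).
  replace (INR (fact (2 * 0))) with 1 in * by (simpl; ring).
  simpl pow in *.
  assert (0 <= a * a) by nra; assert (a * a <= 4) by nra.
  assert (a * a * a * a <= 4 * (a * a)).
  { replace (a * a * a * a) with ((a * a) * (a * a)) by ring; apply Rmult_le_compat_r; lra. }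
  apply Rabs_le; simpl; lra.
Qed.

Lemma Cexp_sub_linear_bound (w : Cpx) : Cnorm1 w <= 1 / 2 ->
  Cnorm1 (Csub (Csub (Cexp w) Cpx1) w) <= 3 * Cnorm1 w ^ 2.
Proof.
  intros H; destruct w as [x y]; unfold Cnorm1 in *; simpl in *.
  pose proof (Rabs_pos x); pose proof (Rabs_pos y).
  destruct (exp_small_bounds x ltac:(lra)) as [e1 [e2 e3]].
  destruct (sin_small_bounds y ltac:(lra)) as [s1 s2].
  pose proof (cos_small_bound y ltac:(lra)) as c1.
  pose proof (exp_pos x).
  match goal with |- Rabs ?A + Rabs ?B <= _ =>
    replace A with ((exp x - 1 - x) + exp x * (cos y - 1)) by ring;
    replace B with ((exp x - 1) * sin y + (sin y - y)) by ring end.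
  pose proof (Rabs_triang (exp x - 1 - x) (exp x * (cos y - 1))).
  pose proof (Rabs_triang ((exp x - 1) * sin y) (sin y - y)).
  rewrite !Rabs_mult in *; rewrite (Rabs_right (exp x)) in * by lra.
  pose proof (Rsqr_abs x); pose proof (Rsqr_abs y); unfold Rsqr in *.
  assert (exp x * Rabs (cos y - 1) <= 2 * (y ^ 2 / 2))
    by (apply Rmult_le_compat; try lra; apply Rabs_pos).
  assert (Rabs (exp x - 1) * Rabs (sin y) <= (2 * Rabs x) * Rabs y)
    by (apply Rmult_le_compat; try lra; apply Rabs_pos).
  simpl pow in *; nra.
Qed.

Lemma ln_ratio_bounds (n : nat) : (1 <= n)%nat ->
  Rabs (ln (INR n) - ln (INR n + 1)) <= 2 * / (INR n + 1) /\
  Rabs (/ (INR n + 1) + (ln (INR n) - ln (INR n + 1))) <= 2 * (/ (INR n + 1)) ^ 2.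
Proof.
  intros Hn; assert (1 <= INR n) by (apply (le_INR 1); auto).
  set (N := INR n) in *; set (t := / (N + 1)); set (s := ln N - ln (N + 1)).
  assert (0 < t) by (apply Rinv_0_lt_compat; lra).
  assert (t <= 1 / 2).
  { unfold t; apply (Rmult_le_reg_l (N + 1)); [lra|]; rewrite Rinv_r by lra; lra. }
  assert (Hes : exp s = 1 - t).
  { unfold s, Rminus; rewrite exp_plus, exp_Ropp, !exp_ln by lra; unfold t; field; lra. }
  assert (Up : s <= - t).
  { destruct (Rle_dec s (- t)) as [|Hc]; auto; apply Rnot_le_lt, exp_increasing in Hc.
    pose proof (exp_ineq1_le (- t)); lra. }
  assert (Lo : - (t + 2 * t ^ 2) <= s).
  { destruct (Rle_dec (- (t + 2 * t ^ 2)) s) as [|Hc]; auto.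
    apply Rnot_le_lt, exp_increasing in Hc; rewrite Hes in Hc.
    pose proof (exp_ineq1_le (t + 2 * t ^ 2)).
    assert (exp (t + 2 * t ^ 2) * exp (- (t + 2 * t ^ 2)) = 1)
      by (rewrite <- exp_plus, Rplus_opp_r; apply exp_0).
    pose proof (exp_pos (- (t + 2 * t ^ 2))).
    assert ((1 + (t + 2 * t ^ 2)) * exp (- (t + 2 * t ^ 2)) <= 1) by nra.
    simpl pow in *; nra. }
  split; apply Rabs_le; simpl pow in *; nra.
Qed.

(** * Gauss' product and the recurrence of 1/Gamma *)

Definition gauss_ratio (z : Cpx) (n : nat) : Cpx :=
  Cmul (Cadd Cpx1 (Cmul z (RtoC (/ (INR n + 1)))))
       (Cexp (Cmul z (RtoC (ln (INR n) - ln (INR n + 1))))).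

Lemma gauss_seq_S (z : Cpx) (n : nat) : (1 <= n)%nat ->
  gauss_seq z (S n) = Cmul (gauss_seq z n) (gauss_ratio z n).
Proof.
  intros Hn; assert (1 <= INR n) by (apply (le_INR 1); auto).
  unfold gauss_seq, gauss_ratio, Cnatpow; cbn [Cprod].
  rewrite fact_simpl, mult_INR, !S_INR, RtoC_mul.
  set (s := ln (INR n) - ln (INR n + 1)).
  replace (Cmul z (RtoC (ln (INR n)))) with
    (Cadd (Cmul z (RtoC (ln (INR n + 1)))) (Cmul z (RtoC s))) by (unfold s; Cpx_eq; ring).
  rewrite Cexp_add, RtoC_inv by lra.
  pose proof (Cexp_neq0 (Cmul z (RtoC (ln (INR n + 1))))).
  pose proof (Cexp_neq0 (Cmul z (RtoC s))).
  pose proof (RtoC_neq0 (INR n + 1) ltac:(lra)).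
  pose proof (RtoC_neq0 (INR (fact n)) (INR_fact_neq_0 n)).
  field; repeat split; auto.
Qed.

Definition gauss_const (z : Cpx) : R :=
  2 * Cnorm1 z + 2 * Cnorm1 z ^ 2 + 12 * (1 + Cnorm1 z) * Cnorm1 z ^ 2.

Lemma gauss_const_ge0 (z : Cpx) : 0 <= gauss_const z.
Proof. unfold gauss_const; pose proof (Cnorm1_ge0 z); simpl pow; nra. Qed.

(* The first-order terms of [(1 + z t) exp (z s)] cancel because [s = -t + O(t^2)]. *)
Lemma ratio_factor_bound (z : Cpx) (t s : R) :
  0 < t -> t * (4 * (Cnorm1 z + 1)) <= 1 ->
  Rabs s <= 2 * t -> Rabs (t + s) <= 2 * t ^ 2 ->
  Cnorm1 (Csub (Cmul (Cadd Cpx1 (Cmul z (RtoC t))) (Cexp (Cmul z (RtoC s)))) Cpx1)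
    <= gauss_const z * t ^ 2.
Proof.
  intros Ht Htz Hs Hts.
  set (w := Cmul z (RtoC s)).
  replace (Csub (Cmul (Cadd Cpx1 (Cmul z (RtoC t))) (Cexp w)) Cpx1) with
    (Cadd (Cadd (Cmul z (RtoC (t + s))) (Cmul (Cmul z (RtoC t)) w))
          (Cmul (Cadd Cpx1 (Cmul z (RtoC t))) (Csub (Csub (Cexp w) Cpx1) w)))
    by (unfold w; rewrite RtoC_add; ring).
  pose proof (Cnorm1_ge0 z) as Hz.
  assert (Hw : Cnorm1 w <= 2 * t * Cnorm1 z).
  { unfold w; rewrite Cnorm1_mul_RtoC, Rmult_comm; apply Rmult_le_compat_r; lra. }
  pose proof (Cexp_sub_linear_bound w ltac:(nra)) as He.
  pose proof (Cnorm1_ge0 w); pose proof (Cnorm1_ge0 (Csub (Csub (Cexp w) Cpx1) w)).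
  assert (H1 : Cnorm1 (Cadd Cpx1 (Cmul z (RtoC t))) <= 1 + Cnorm1 z * t).
  { eapply Rle_trans; [apply Cnorm1_add|]; rewrite Cnorm1_mul_RtoC, (Rabs_right t) by lra.
    unfold Cnorm1, Cpx1, RtoC; simpl; rewrite Rabs_R0, Rabs_R1; lra. }
  pose proof (Cnorm1_ge0 (Cadd Cpx1 (Cmul z (RtoC t)))).
  eapply Rle_trans; [apply Cnorm1_add|].
  eapply Rle_trans; [apply Rplus_le_compat; [apply Cnorm1_add | apply Cnorm1_mul]|].
  eapply Rle_trans; [apply Rplus_le_compat;
    [apply Rplus_le_compat; [apply Req_le, Cnorm1_mul_RtoC | apply Cnorm1_mul] | apply Rle_refl]|].
  rewrite Cnorm1_mul_RtoC, (Rabs_right t) by lra.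
  assert (Cnorm1 z * Rabs (t + s) <= Cnorm1 z * (2 * t ^ 2)) by (apply Rmult_le_compat_l; lra).
  assert (Cnorm1 z * t * Cnorm1 w <= Cnorm1 z * t * (2 * t * Cnorm1 z))
    by (apply Rmult_le_compat_l; nra).
  assert (Cnorm1 w ^ 2 <= (2 * t * Cnorm1 z) ^ 2) by (apply pow_incr; lra).
  assert (Cnorm1 (Cadd Cpx1 (Cmul z (RtoC t))) * Cnorm1 (Csub (Csub (Cexp w) Cpx1) w)
            <= (1 + Cnorm1 z) * (3 * (2 * t * Cnorm1 z) ^ 2))
    by (apply Rmult_le_compat; try lra; nra).
  unfold gauss_const; simpl pow in *; nra.
Qed.

Lemma gauss_seq_increment_bound (z : Cpx) (n : nat) :
  (1 <= n)%nat -> 4 * (Cnorm1 z + 1) <= INR n + 1 ->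
  Cnorm1 (Csub (gauss_seq z (S n)) (gauss_seq z n))
    <= gauss_const z * Cnorm1 (gauss_seq z n) * (/ INR n - / INR (S n)).
Proof.
  intros Hn Hbig; assert (1 <= INR n) by (apply (le_INR 1); auto).
  rewrite gauss_seq_S by auto.
  replace (Csub (Cmul (gauss_seq z n) (gauss_ratio z n)) (gauss_seq z n))
    with (Cmul (gauss_seq z n) (Csub (gauss_ratio z n) Cpx1)) by ring.
  eapply Rle_trans; [apply Cnorm1_mul|].
  destruct (ln_ratio_bounds n Hn) as [Hs Hts].
  assert (Ht : 0 < / (INR n + 1)) by (apply Rinv_0_lt_compat; lra).
  assert (Htz : / (INR n + 1) * (4 * (Cnorm1 z + 1)) <= 1).
  { apply (Rmult_le_reg_l (INR n + 1)); [lra|]; rewrite <- Rmult_assoc, Rinv_r by lra; lra. }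
  pose proof (ratio_factor_bound z _ _ Ht Htz Hs Hts) as E.
  assert ((/ (INR n + 1)) ^ 2 <= / INR n - / INR (S n)).
  { rewrite inv_INR_S_diff by auto; simpl pow; rewrite Rmult_1_r, <- Rinv_mult.
    apply Rinv_le_contravar; nra. }
  pose proof (Cnorm1_ge0 (gauss_seq z n)); pose proof (gauss_const_ge0 z).
  rewrite (Rmult_comm (gauss_const z)), Rmult_assoc.
  apply Rmult_le_compat_l; auto.
  eapply Rle_trans; [exact E|]; apply Rmult_le_compat_l; auto.
Qed.

Lemma gauss_seq_cv (z : Cpx) : exists l, Ccv (gauss_seq z) l.
Proof.
  destruct (INR_unbounded (4 * (Cnorm1 z + 1))) as [N HN].
  apply (Ccv_of_ratio _ (gauss_const z) (S N)); [lia | apply gauss_const_ge0|].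
  intros n Hn; apply gauss_seq_increment_bound; [lia|].
  assert (INR (S N) <= INR n) by (apply le_INR; auto); rewrite S_INR in *; lra.
Qed.

Lemma rgamma_spec (z : Cpx) : Ccv (gauss_seq z) (rgamma z).
Proof. unfold rgamma; apply epsilon_spec, gauss_seq_cv. Qed.

Lemma Cprod_shift (z : Cpx) (n : nat) :
  Cmul z (Cprod (fun j => Cadd (Cadd z Cpx1) (RtoC (INR j))) n) =
  Cprod (fun j => Cadd z (RtoC (INR j))) (S n).
Proof.
  induction n as [|n IH]; [Cpx_eq; ring|].
  cbn [Cprod] in *; rewrite <- IH.
  transitivity (Cmul (Cmul z (Cprod (fun j => Cadd (Cadd z Cpx1) (RtoC (INR j))) n))
                     (Cadd (Cadd z Cpx1) (RtoC (INR (S n))))); [ring|].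
  f_equal; Cpx_eq; rewrite ?(S_INR (S n)); ring.
Qed.

Lemma gauss_seq_add1 (z : Cpx) (n : nat) : (1 <= n)%nat ->
  Cmul (gauss_seq z n) (Cadd Cpx1 (Cmul (Cadd z Cpx1) (RtoC (/ INR n)))) =
  Cmul z (gauss_seq (Cadd z Cpx1) n).
Proof.
  intros Hn; assert (1 <= INR n) by (apply (le_INR 1); auto).
  unfold gauss_seq.
  assert (Epow : Cnatpow n (Cadd z Cpx1) = Cmul (Cnatpow n z) (RtoC (INR n))).
  { unfold Cnatpow.
    replace (Cmul (Cadd z Cpx1) (RtoC (ln (INR n)))) with
      (Cadd (Cmul z (RtoC (ln (INR n)))) (RtoC (ln (INR n)))) by (Cpx_eq; ring).
    rewrite Cexp_add; f_equal.
    unfold Cexp, RtoC; simpl; rewrite exp_ln, cos_0, sin_0 by lra; Cpx_eq; ring. }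
  rewrite Epow, RtoC_inv by lra.
  set (Q := Cprod (fun j => Cadd (Cadd z Cpx1) (RtoC (INR j))) n).
  set (P := Cprod (fun j => Cadd z (RtoC (INR j))) n).
  assert (HQ : Cmul z Q = Cmul P (Cadd z (RtoC (INR n + 1)))).
  { unfold Q, P; rewrite Cprod_shift; cbn [Cprod]; rewrite S_INR; reflexivity. }
  pose proof (Cexp_neq0 (Cmul z (RtoC (ln (INR n))))); unfold Cnatpow.
  pose proof (RtoC_neq0 (INR n) ltac:(lra)).
  pose proof (RtoC_neq0 (INR (fact n)) (INR_fact_neq_0 n)).
  rewrite RtoC_add in HQ; change (RtoC 1) with Cpx1 in HQ; clearbody P Q.
  transitivity (Cdiv (Cmul z Q) (Cmul (RtoC (INR (fact n)))
     (Cmul (Cexp (Cmul z (RtoC (ln (INR n))))) (RtoC (INR n))))).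
  - rewrite HQ; field; repeat split; auto.
  - field; repeat split; auto.
Qed.

Lemma rgamma_rec (z : Cpx) : rgamma z = Cmul z (rgamma (Cadd z Cpx1)).
Proof.
  pose proof (Ccv_parts_of_Ccv _ _ (rgamma_spec z)) as H0.
  pose proof (Ccv_parts_of_Ccv _ _ (rgamma_spec (Cadd z Cpx1))) as H1.
  (* [gauss_seq z n * (1 + (z+1)/n) = z * gauss_seq (z+1) n] and [(z+1)/n -> 0] *)
  assert (Hfac : Ccv_parts (fun n => Cadd Cpx1 (Cmul (Cadd z Cpx1) (RtoC (/ INR n))))
                           (Cadd Cpx1 (Cmul (Cadd z Cpx1) Cpx0))).
  { apply Ccv_parts_add; [apply Ccv_parts_const|].
    apply Ccv_parts_mul; [apply Ccv_parts_const | apply Ccv_parts_inv_INR]. }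
  pose proof (Ccv_parts_mul _ _ _ _ H0 Hfac) as Hl.
  apply (Ccv_parts_ext_pos _ (fun n => Cmul z (gauss_seq (Cadd z Cpx1) n))) in Hl;
    [|intros; apply gauss_seq_add1; auto].
  pose proof (Ccv_parts_mul _ _ _ _ (Ccv_parts_const z) H1) as Hr.
  rewrite <- (Ccv_parts_unique _ _ _ Hl Hr); ring.
Qed.

Lemma Gamma_add1 (z : Cpx) : z <> Cpx0 -> Gamma (Cadd z Cpx1) = Cmul z (Gamma z).
Proof.
  intros Hz; unfold Gamma; rewrite (rgamma_rec z), Cinv_mul.
  assert (Cmul z (Cinv z) = Cpx1) by (replace (Cinv z) with (Cdiv Cpx1 z) by (unfold Cdiv; ring); field; auto).
  transitivity (Cmul (Cmul z (Cinv z)) (Cinv (rgamma (Cadd z Cpx1)))); [rewrite H; ring | ring].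
Qed.

(** * The telescoping identity *)

Lemma Csum_ext (f g : nat -> Cpx) (n : nat) :
  (forall m, (m <= n)%nat -> f m = g m) -> Csum f n = Csum g n.
Proof.
  induction n as [|n IH]; intros H; simpl.
  - apply H; lia.
  - rewrite IH by (intros; apply H; lia); rewrite (H (S n)) by lia; reflexivity.
Qed.

Lemma Csum_telescope2 (f : nat -> Cpx) (n : nat) :
  Csum (fun m => Csub (f m) (f (S (S m)))) n =
  Csub (Csub (Cadd (f O) (f 1%nat)) (f (S n))) (f (S (S n))).
Proof. induction n as [|n IH]; simpl; [|rewrite IH]; ring. Qed.

Definition gamma_arg (a : Cpx) (k m : nat) : Cpx :=
  Cdiv (Cadd a (RtoC (INR k + INR m))) (RtoC 2).

Definition rgamma_arg (a b : Cpx) (k m : nat) : Cpx :=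
  Csub (Cdiv (Cadd a (RtoC (- INR k + INR m))) (RtoC 2)) b.

Lemma gamma_arg_SS (a : Cpx) (k m : nat) :
  gamma_arg a k (S (S m)) = Cadd (gamma_arg a k m) Cpx1.
Proof. unfold gamma_arg; rewrite !Cdiv_RtoC by lra; rewrite !S_INR; Cpx_eq; field. Qed.

Lemma rgamma_arg_SS (a b : Cpx) (k m : nat) :
  rgamma_arg a b k (S (S m)) = Cadd (rgamma_arg a b k m) Cpx1.
Proof. unfold rgamma_arg; rewrite !Cdiv_RtoC by lra; rewrite !S_INR; Cpx_eq; field. Qed.

Definition weight (k j : nat) : R :=
  if (j <=? k)%nat then Binomial.C k j * INR j / INR k else 0.

Lemma weight_gt (k j : nat) : (k < j)%nat -> weight k j = 0.
Proof. intros H; unfold weight; rewrite (proj2 (Nat.leb_gt _ _) H); reflexivity. Qed.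

Lemma weight_0 (k : nat) : weight k 0 = 0.
Proof. unfold weight; destruct (0 <=? k)%nat; [simpl INR; unfold Rdiv; ring | reflexivity]. Qed.

Lemma weight_1 (k : nat) : (1 <= k)%nat -> weight k 1 = 1.
Proof.
  intros Hk; unfold weight; rewrite (proj2 (Nat.leb_le _ _) Hk).
  rewrite (pascal_step3 k 0) by lia; rewrite Nat.sub_0_r.
  assert (INR k <> 0) by (apply not_0_INR; lia).
  unfold Binomial.C; simpl INR; rewrite Nat.sub_0_r; field; split; [apply INR_fact_neq_0 | auto].
Qed.

Lemma weight_SS (k m : nat) : (1 <= k)%nat -> (m <= k)%nat ->
  weight k (S (S m))
  = Binomial.C k m * ((INR k - INR m) * (INR k - INR m - 1)) / (INR k * (INR m + 1)).
Proof.
  intros Hk Hm; assert (INR k <> 0) by (apply not_0_INR; lia); pose proof (pos_INR m).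
  destruct (Nat.leb_spec (S (S m)) k) as [Hle|Hgt].
  - unfold weight; rewrite (proj2 (Nat.leb_le _ _) Hle).
    rewrite (pascal_step3 k (S m)), (pascal_step3 k m) by lia.
    rewrite !minus_INR, !S_INR by lia; field; lra.
  - rewrite weight_gt by lia.
    assert (m = k \/ S m = k)%nat as [->| <-] by lia; rewrite ?S_INR; unfold Rdiv; ring.
Qed.

Definition summand_coef (a b : Cpx) (k m : nat) : Cpx :=
  Csub (Csub (Cadd a (RtoC ((INR k - 1) / 2)))
             (Cdiv (Cmul b (RtoC (INR m))) (RtoC (INR k))))
       (Cdiv (Cmul (RtoC (INR k + 1)) (Cadd a (RtoC (INR k - 1))))
             (RtoC (2 * (INR m + 1)))).

Lemma summand_coef_split (a b : Cpx) (k m : nat) : (1 <= k)%nat -> (m <= k)%nat ->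
  Cmul (RtoC (Binomial.C k m)) (summand_coef a b k m) =
  Csub (Cmul (RtoC (weight k m)) (rgamma_arg a b k m))
       (Cmul (RtoC (weight k (S (S m)))) (gamma_arg a k m)).
Proof.
  intros Hk Hm; rewrite weight_SS by auto; unfold weight.
  rewrite (proj2 (Nat.leb_le _ _) Hm).
  assert (INR k <> 0) by (apply not_0_INR; lia); pose proof (pos_INR m).
  unfold summand_coef, gamma_arg, rgamma_arg; rewrite !Cdiv_RtoC by lra.
  Cpx_eq; field; lra.
Qed.

Definition gamma_term (a b : Cpx) (k j : nat) : Cpx :=
  Cmul (RtoC (weight k j)) (Cmul (Gamma (gamma_arg a k j)) (rgamma (rgamma_arg a b k j))).

Lemma summand_telescopes (a b : Cpx) (k m : nat) : (1 <= k)%nat -> (m <= k)%nat ->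
  ~ nonpos_int (gamma_arg a k m) ->
  Cmul (RtoC (Binomial.C k m))
    (Cmul (summand_coef a b k m)
          (Cmul (Gamma (gamma_arg a k m)) (rgamma (Cadd (rgamma_arg a b k m) Cpx1))))
  = Csub (gamma_term a b k m) (gamma_term a b k (S (S m))).
Proof.
  intros Hk Hm Hnp; unfold gamma_term.
  rewrite gamma_arg_SS, rgamma_arg_SS, (rgamma_rec (rgamma_arg a b k m)).
  set (G := Gamma (gamma_arg a k m)); set (r := rgamma (Cadd (rgamma_arg a b k m) Cpx1)).
  transitivity (Cmul (Cmul (RtoC (Binomial.C k m)) (summand_coef a b k m)) (Cmul G r)); [ring|].
  rewrite summand_coef_split by auto.
  rewrite Gamma_add1; [unfold G; ring|].
  intros E; apply Hnp; exists O; rewrite E; Cpx_eq; simpl; ring.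
Qed.

Theorem mainTheorem5 (k : nat) (a b : Cpx) :
  (1 <= k)%nat ->
  ~ nonpos_int (Cdiv (Cadd a (RtoC (INR k + 1))) (RtoC 2)) ->
  (forall m : nat, (m <= k)%nat ->
     ~ nonpos_int (Cdiv (Cadd a (RtoC (INR k + INR m))) (RtoC 2))) ->
  Cmul (Gamma (Cdiv (Cadd a (RtoC (INR k + 1))) (RtoC 2)))
       (rgamma (Csub (Cdiv (Cadd a (RtoC (- INR k + 1))) (RtoC 2)) b))
  = Csum (fun m =>
      Cmul (RtoC (Binomial.C k m))
       (Cmul
         (Csub (Csub (Cadd a (RtoC ((INR k - 1) / 2)))
                     (Cdiv (Cmul b (RtoC (INR m))) (RtoC (INR k))))
               (Cdiv (Cmul (RtoC (INR k + 1)) (Cadd a (RtoC (INR k - 1))))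
                     (RtoC (2 * (INR m + 1)))))
         (Cmul (Gamma (Cdiv (Cadd a (RtoC (INR k + INR m))) (RtoC 2)))
               (rgamma (Cadd (Csub (Cdiv (Cadd a (RtoC (- INR k + INR m))) (RtoC 2)) b)
                             Cpx1))))) k.
Proof.
  (* The second hypothesis is the case [m = 1] of the third. *)
  intros Hk _ Hnp.
  rewrite (Csum_ext _ (fun m => Csub (gamma_term a b k m) (gamma_term a b k (S (S m)))))
    by (intros m Hm; exact (summand_telescopes a b k m Hk Hm (Hnp m Hm))).
  rewrite Csum_telescope2; unfold gamma_term.
  rewrite weight_0, weight_1, (weight_gt k (S k)), (weight_gt k (S (S k))) by lia.
  change (RtoC 0) with Cpx0; change (RtoC 1) with Cpx1.
  unfold gamma_arg, rgamma_arg; simpl (INR 1); ring.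
Qed.
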